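(* The Hausdorff mapping $\mathcal{H}\colon\mathcal{M}\to\mathcal{M}$ is nonexpanding, and its Lipschitz constant is exactly $1$: for all compact metric spaces $X,Y$ one has $d_{GH}(\mathcal{H}(X),\mathcal{H}(Y)) \le d_{GH}(X,Y)$, and for a one-point space $\{x\}$ and every compact metric space $Y$ one has $d_{GH}\bigl(\mathcal{H}(\{x\}),\mathcal{H}(Y)\bigr) = d_{GH}(\{x\},Y)$.
   Context: $\mathcal{M}$ denotes the set of isometry classes of compact metric spaces with the Gromov–Hausdorff distance $d_{GH}$ (the infimum of $r$ such that there is a metric space $Z$ containing isometric copies $X',Y'$ of $X,Y$ with Hausdorff distance $|X'Y'|_Z\le r$). For a compact metric space $X$, $\mathcal{H}(X)$ is the set of all nonempty closed subsets of $X$ with the Hausdorff distance $|AB| = \max\{\sup_{a\in A}\inf_{b\in B}|ab|, \sup_{b\in B}\inf_{a\in A}|ab|\}$; the Hausdorff mapping sends $X$ to $\mathcal{H}(X)$. *)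

From Stdlib Require Import Reals Lra Classical ClassicalEpsilon.
Open Scope R_scope.

(** Supremum / infimum of a set of reals (classical choice).  Defaults to 0
    if the set is empty or unbounded (never happens in our uses). *)
Definition Rsup (E : R -> Prop) : R :=
  match excluded_middle_informative (bound E /\ exists x, E x) with
  | left H => proj1_sig (completeness E (proj1 H) (proj2 H))
  | right _ => 0
  end.

Definition Rinf (E : R -> Prop) : R := - Rsup (fun x => E (- x)).

Record MetricSpace := {
  carrier :> Type;
  mdist : carrier -> carrier -> R;
  dist_eq0 : forall x y, mdist x y = 0 <-> x = y;
  dist_sym : forall x y, mdist x y = mdist y x;
  dist_tri : forall x y z, mdist x z <= mdist x y + mdist y z
}.
Arguments mdist {m} _ _.

Definition converges_to {T : Type} (d : T -> T -> R) (u : nat -> T) (l : T) : Prop :=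
  forall eps, 0 < eps -> exists N, forall n, (N <= n)%nat -> d (u n) l < eps.

(** Sequential compactness (equivalent to compactness for metric spaces). *)
Definition compact_space (X : MetricSpace) : Prop :=
  forall u : nat -> X, exists (phi : nat -> nat) (l : X),
    (forall n m, (n < m)%nat -> (phi n < phi m)%nat) /\
    converges_to (@mdist X) (fun n => u (phi n)) l.

Definition closed_set (X : MetricSpace) (A : X -> Prop) : Prop :=
  forall (u : nat -> X) (l : X),
    (forall n, A (u n)) -> converges_to (@mdist X) u l -> A l.

Definition hausdorff {T : Type} (d : T -> T -> R) (A B : T -> Prop) : R :=
  Rmax
    (Rsup (fun s => exists a, A a /\ s = Rinf (fun t => exists b, B b /\ t = d a b)))
    (Rsup (fun s => exists b, B b /\ s = Rinf (fun t => exists a, A a /\ t = d a b))).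

Definition Hyp (X : MetricSpace) : Type :=
  { A : X -> Prop | (exists x, A x) /\ closed_set X A }.

Definition hyp_dist (X : MetricSpace) (A B : Hyp X) : R :=
  hausdorff (@mdist X) (proj1_sig A) (proj1_sig B).

Definition isometric_embedding {T : Type} (d : T -> T -> R) (Z : MetricSpace)
  (f : T -> Z) : Prop :=
  forall a b, mdist (f a) (f b) = d a b.

Definition GH {T1 : Type} (d1 : T1 -> T1 -> R) {T2 : Type} (d2 : T2 -> T2 -> R) : R :=
  Rinf (fun r => exists (Z : MetricSpace) (f : T1 -> Z) (g : T2 -> Z),
          isometric_embedding d1 Z f /\ isometric_embedding d2 Z g /\
          hausdorff (@mdist Z) (fun z => exists a, z = f a) (fun z => exists b, z = g b) <= r).

(* Suppose X and Y sit in a common metric space Z at Hausdorff distance at most r. Sending a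
   closed set A of X to the set of points of Y lying within r of (the image of) A produces a
   closed set of Y at Hausdorff distance at most r from A, and symmetrically; so inside the
   space of nonempty compact subsets of Z, which contains isometric copies of H(X) and H(Y),
   these copies are at Hausdorff distance at most r. Conversely, if X is a single point, H(X)
   is a single point p, which lies within r of every element of the copy of H(Y), in particular
   of the singletons; and the singletons form an isometric copy of Y. *)

From Pilot Require Import Defs.
From Stdlib Require Import Reals Lra Lia Classical ClassicalEpsilon
  FunctionalExtensionality PropExtensionality ProofIrrelevance.
Open Scope R_scope.

Lemma set_ext {T : Type} (E1 E2 : T -> Prop) : (forall x, E1 x <-> E2 x) -> E1 = E2.
Proof.
  intros H. apply functional_extensionality; intro x.
  apply propositional_extensionality, H.
Qed.

Lemma Rsup_lub (E : R -> Prop) : bound E -> (exists x, E x) -> is_lub E (Rsup E).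
Proof.
  intros Hb He. unfold Rsup.
  destruct (excluded_middle_informative _) as [H|H].
  - exact (proj2_sig (completeness E (proj1 H) (proj2 H))).
  - tauto.
Qed.

Lemma Rsup_empty (E : R -> Prop) : ~ (exists x, E x) -> Rsup E = 0.
Proof.
  intros He. unfold Rsup.
  destruct (excluded_middle_informative _) as [H|H]; [exfalso; apply He, H | reflexivity].
Qed.

Lemma Rsup_ub (E : R -> Prop) M x : E x -> (forall y, E y -> y <= M) -> x <= Rsup E.
Proof.
  intros Hx HM. apply (Rsup_lub E); [exists M; exact HM | eauto | exact Hx].
Qed.

Lemma Rsup_least (E : R -> Prop) M :
  (exists x, E x) -> (forall y, E y -> y <= M) -> Rsup E <= M.
Proof.
  intros He HM. apply (Rsup_lub E); [exists M; exact HM | exact He | exact HM].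
Qed.

Lemma Rsup_le (E : R -> Prop) M : 0 <= M -> (forall y, E y -> y <= M) -> Rsup E <= M.
Proof.
  intros HM0 HM. destruct (classic (exists x, E x)) as [He|He].
  - apply Rsup_least; auto.
  - rewrite Rsup_empty; auto.
Qed.

Lemma Rsup_nonneg (E : R -> Prop) : (forall y, E y -> 0 <= y) -> 0 <= Rsup E.
Proof.
  intros H. unfold Rsup.
  destruct (excluded_middle_informative _) as [HE|_]; [|lra].
  destruct (completeness E (proj1 HE) (proj2 HE)) as [s Hs]; simpl.
  destruct (proj2 HE) as [x Hx]. apply Rle_trans with x; [auto | apply Hs, Hx].
Qed.

Lemma Rsup_single (E : R -> Prop) v : (forall x, E x <-> x = v) -> Rsup E = v.
Proof.
  intros H. apply Rle_antisym.
  - apply Rsup_least; [exists v; apply H; reflexivity |].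
    intros y Hy. apply H in Hy. lra.
  - apply Rsup_ub with v; [apply H; reflexivity |].
    intros y Hy. apply H in Hy. lra.
Qed.

Lemma Rinf_lb (E : R -> Prop) m t : E t -> (forall x, E x -> m <= x) -> Rinf E <= t.
Proof.
  intros Ht Hm. unfold Rinf.
  enough (- t <= Rsup (fun x => E (- x))) by lra.
  apply Rsup_ub with (- m); [rewrite Ropp_involutive; exact Ht |].
  intros y Hy. apply Hm in Hy. lra.
Qed.

Lemma Rinf_greatest (E : R -> Prop) m :
  (exists x, E x) -> (forall x, E x -> m <= x) -> m <= Rinf E.
Proof.
  intros [t Ht] Hm. unfold Rinf.
  enough (Rsup (fun x => E (- x)) <= - m) by lra.
  apply Rsup_least; [exists (- t); rewrite Ropp_involutive; exact Ht |].
  intros y Hy. apply Hm in Hy. lra.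
Qed.

Lemma Rinf_empty (E : R -> Prop) : ~ (exists x, E x) -> Rinf E = 0.
Proof.
  intros H. unfold Rinf. rewrite Rsup_empty; [lra |].
  intros [x Hx]. eauto.
Qed.

Lemma Rinf_nonneg (E : R -> Prop) : (forall y, E y -> 0 <= y) -> 0 <= Rinf E.
Proof.
  intros H. destruct (classic (exists x, E x)) as [He|He].
  - apply Rinf_greatest; auto.
  - rewrite Rinf_empty; auto. lra.
Qed.

Lemma Rinf_single (E : R -> Prop) v : (forall x, E x <-> x = v) -> Rinf E = v.
Proof.
  intros H. apply Rle_antisym.
  - apply Rinf_lb with v; [apply H; reflexivity |].
    intros y Hy. apply H in Hy. lra.
  - apply Rinf_greatest; [exists v; apply H; reflexivity |].
    intros y Hy. apply H in Hy. lra.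
Qed.

Lemma Rinf_le_subset (E1 E2 : R -> Prop) :
  (exists x, E2 x) -> (forall x, E2 x -> E1 x) -> (forall x, E1 x -> 0 <= x) ->
  Rinf E1 <= Rinf E2.
Proof.
  intros He Hs H0. apply Rinf_greatest; auto.
  intros x Hx. apply Rinf_lb with 0; auto.
Qed.

(* The empty case is needed because [Rinf] of the empty set is [0]. *)
Lemma Rinf_image_le {U : Type} (B : U -> Prop) (P : U -> R) r :
  0 <= r -> (forall x, 0 <= P x) -> ((exists b, B b) -> exists b, B b /\ P b <= r) ->
  Rinf (fun t => exists b, B b /\ t = P b) <= r.
Proof.
  intros Hr HP HB. destruct (classic (exists b, B b)) as [He|He].
  - destruct (HB He) as [b [Hb Hbr]].
    apply Rle_trans with (P b); [| exact Hbr].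
    apply Rinf_lb with 0; [eauto |]. intros x [c [_ ->]]. apply HP.
  - rewrite Rinf_empty; [exact Hr |]. intros [t [b [Hb _]]]. eauto.
Qed.

Definition dist_to {T : Type} (d : T -> T -> R) (a : T) (B : T -> Prop) : R :=
  Rinf (fun t => exists b, B b /\ t = d a b).

Definition excess {T : Type} (d : T -> T -> R) (A B : T -> Prop) : R :=
  Rsup (fun s => exists a, A a /\ s = dist_to d a B).

Definition img {T1 T2 : Type} (f : T1 -> T2) (A : T1 -> Prop) : T2 -> Prop :=
  fun z => exists a, A a /\ z = f a.

Section HausdorffGeneral.
Context {T : Type} (d : T -> T -> R).

Lemma hausdorff_excess (A B : T -> Prop) : (forall x y, d x y = d y x) ->
  hausdorff d A B = Rmax (excess d A B) (excess d B A).
Proof.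
  intros Hs. unfold hausdorff, excess, dist_to. do 2 f_equal.
  apply set_ext; intro s.
  split; intros [b [Hb ->]]; exists b; split; auto; f_equal;
    apply set_ext; intro t;
    split; intros [a [Ha ->]]; exists a; split; auto.
Qed.

Lemma hausdorff_sym (A B : T -> Prop) : (forall x y, d x y = d y x) ->
  hausdorff d A B = hausdorff d B A.
Proof. intros Hs. rewrite !hausdorff_excess by exact Hs. apply Rmax_comm. Qed.

Lemma hausdorff_nonneg (A B : T -> Prop) : (forall x y, 0 <= d x y) -> 0 <= hausdorff d A B.
Proof.
  intros H. unfold hausdorff. apply Rle_trans with (2 := Rmax_l _ _).
  apply Rsup_nonneg. intros s [a [_ ->]].
  apply Rinf_nonneg. intros t [b [_ ->]]. apply H.
Qed.

Lemma hausdorff_le_of_near (A B : T -> Prop) r : 0 <= r -> (forall x y, 0 <= d x y) ->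
  (forall a, A a -> (exists b, B b) -> exists b, B b /\ d a b <= r) ->
  (forall b, B b -> (exists a, A a) -> exists a, A a /\ d a b <= r) ->
  hausdorff d A B <= r.
Proof.
  intros Hr Hd HA HB. unfold hausdorff. apply Rmax_lub; apply Rsup_le; auto.
  - intros s [a [Ha ->]]. apply (Rinf_image_le B (d a)); auto.
  - intros s [b [Hb ->]]. apply (Rinf_image_le A (fun a => d a b)); auto.
Qed.

Lemma hausdorff_singletons (y y' : T) :
  hausdorff d (fun z => z = y) (fun z => z = y') = d y y'.
Proof.
  unfold hausdorff.
  assert (H1 : forall a, Rinf (fun t => exists b, b = y' /\ t = d a b) = d a y').
  { intros a. apply Rinf_single. intros t.
    split; [intros [b [-> ->]]; reflexivity | intros ->; eauto]. }
  assert (H2 : forall b, Rinf (fun t => exists a, a = y /\ t = d a b) = d y b).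
  { intros b. apply Rinf_single. intros t.
    split; [intros [a [-> ->]]; reflexivity | intros ->; eauto]. }
  rewrite (Rsup_single _ (d y y')), (Rsup_single _ (d y y')).
  - apply Rmax_left, Rle_refl.
  - intros s. split; [intros [b [-> ->]]; apply H2 | intros ->; exists y'; rewrite H2; auto].
  - intros s. split; [intros [a [-> ->]]; apply H1 | intros ->; exists y; rewrite H1; auto].
Qed.

Lemma dist_le_hausdorff_point (p b : T) (B : T -> Prop) M :
  B b -> (forall b', B b' -> d p b' <= M) -> d p b <= hausdorff d (fun z => z = p) B.
Proof.
  intros Hb HM. unfold hausdorff. apply Rle_trans with (2 := Rmax_r _ _).
  assert (Hin : forall b', Rinf (fun t => exists a, a = p /\ t = d a b') = d p b').
  { intros b'. apply Rinf_single. intros t.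
    split; [intros [a [-> ->]]; reflexivity | intros ->; eauto]. }
  apply Rsup_ub with M.
  - exists b. rewrite Hin. auto.
  - intros s [b' [Hb' ->]]. rewrite Hin. auto.
Qed.

Lemma hausdorff_img {T' : Type} (d' : T' -> T' -> R) (f : T' -> T) (A B : T' -> Prop) :
  (forall a b, d (f a) (f b) = d' a b) ->
  hausdorff d (img f A) (img f B) = hausdorff d' A B.
Proof.
  intros Hf. unfold hausdorff.
  assert (E1 : forall a, (fun t => exists w, img f B w /\ t = d (f a) w)
                       = (fun t => exists b, B b /\ t = d' a b)).
  { intros a. apply set_ext; intro t; split.
    - intros [w [[b [Hb ->]] ->]]. eauto.
    - intros [b [Hb ->]]. exists (f b). split; [exists b | ]; auto. }
  assert (E2 : forall b, (fun t => exists z, img f A z /\ t = d z (f b))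
                       = (fun t => exists a, A a /\ t = d' a b)).
  { intros b. apply set_ext; intro t; split.
    - intros [w [[a [Ha ->]] ->]]. eauto.
    - intros [a [Ha ->]]. exists (f a). split; [exists a | ]; auto. }
  f_equal; f_equal; apply set_ext; intro s; split.
  - intros [z [[a [Ha ->]] ->]]. exists a. rewrite E1. auto.
  - intros [a [Ha ->]]. exists (f a). split; [exists a; auto | rewrite E1; auto].
  - intros [z [[a [Ha ->]] ->]]. exists a. rewrite E2. auto.
  - intros [a [Ha ->]]. exists (f a). split; [exists a; auto | rewrite E2; auto].
Qed.

End HausdorffGeneral.

Lemma mdist_refl (Z : MetricSpace) (x : Z) : mdist x x = 0.
Proof. apply Defs.dist_eq0. reflexivity. Qed.

Lemma mdist_nonneg (Z : MetricSpace) (x y : Z) : 0 <= mdist x y.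
Proof.
  pose proof (Defs.dist_tri Z x y x) as H. rewrite (Defs.dist_sym Z y x), mdist_refl in H. lra.
Qed.

Definition strictly_increasing (phi : nat -> nat) : Prop :=
  forall n m, (n < m)%nat -> (phi n < phi m)%nat.

Lemma strictly_increasing_ge phi : strictly_increasing phi -> forall n, (n <= phi n)%nat.
Proof.
  intros H n. induction n as [|n IH]; [lia |]. specialize (H n (S n)). lia.
Qed.

Lemma converges_subseq {T : Type} (d : T -> T -> R) u l phi :
  converges_to d u l -> strictly_increasing phi -> converges_to d (fun n => u (phi n)) l.
Proof.
  intros H Hp eps He. destruct (H eps He) as [N HN]. exists N. intros n Hn.
  apply HN. pose proof (strictly_increasing_ge phi Hp n). lia.
Qed.

Definition compact_nonempty (Z : MetricSpace) (S : Z -> Prop) : Prop :=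
  (exists z, S z) /\ forall u : nat -> Z, (forall n, S (u n)) ->
    exists phi l, strictly_increasing phi /\ S l /\ converges_to (@mdist Z) (fun n => u (phi n)) l.

Section CompactSets.
Variable Z : MetricSpace.
Notation d := (@mdist Z).

Lemma compact_bounded (S : Z -> Prop) (z0 : Z) : compact_nonempty Z S ->
  exists M, forall a, S a -> d a z0 <= M.
Proof.
  intros [_ HS]. apply NNPP. intros HM.
  assert (Hfar : forall n : nat, exists a, S a /\ INR n < d a z0).
  { intros n. apply NNPP. intros Hn. apply HM. exists (INR n). intros a Ha.
    apply Rnot_lt_le. intros Hlt. eauto. }
  apply choice in Hfar as [u Hu].
  destruct (HS u (fun n => proj1 (Hu n))) as [phi [l [Hp [_ Hc]]]].
  destruct (Hc 1 ltac:(lra)) as [N HN].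
  destruct (INR_archimed 1 (1 + d l z0) ltac:(lra)) as [n0 Hn0].
  set (n := Nat.max N n0).
  specialize (HN n ltac:(unfold n; lia)).
  pose proof (proj2 (Hu (phi n))).
  assert (INR n0 <= INR (phi n)).
  { apply le_INR. pose proof (strictly_increasing_ge phi Hp n). unfold n in *. lia. }
  pose proof (Defs.dist_tri Z (u (phi n)) l z0). lra.
Qed.

Lemma nearest_point (B : Z -> Prop) (a : Z) : compact_nonempty Z B ->
  exists b, B b /\ d a b <= dist_to d a B.
Proof.
  intros [[z0 Hz0] HS].
  set (delta := dist_to d a B).
  assert (Hclose : forall n : nat, exists b, B b /\ d a b < delta + / INR (S n)).
  { intros n. apply NNPP. intros Hn.
    assert (Hlb : delta + / INR (S n) <= delta).
    { apply Rinf_greatest; [eauto |]. intros x [c [Hc ->]].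
      apply Rnot_lt_le. intros Hlt. eauto. }
    assert (0 < / INR (S n)) by (apply Rinv_0_lt_compat, lt_0_INR; lia). lra. }
  apply choice in Hclose as [u Hu].
  destruct (HS u (fun n => proj1 (Hu n))) as [phi [l [Hp [Hl Hc]]]].
  exists l. split; [exact Hl |]. apply Rle_plus_epsilon. intros eps He.
  destruct (Hc (eps / 2) ltac:(lra)) as [N HN].
  destruct (archimed_cor1 (eps / 2) ltac:(lra)) as [K [HK HK0]].
  set (n := Nat.max N K).
  specialize (HN n ltac:(unfold n; lia)).
  pose proof (proj2 (Hu (phi n))).
  assert (/ INR (S (phi n)) <= / INR K).
  { apply Rinv_le_contravar; [apply lt_0_INR; lia |]. apply le_INR.
    pose proof (strictly_increasing_ge phi Hp n). unfold n in *. lia. }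
  pose proof (Defs.dist_tri Z a (u (phi n)) l). lra.
Qed.

(** * The Hausdorff distance on nonempty compact sets *)

Lemma dist_to_le (a b : Z) (B : Z -> Prop) : B b -> dist_to d a B <= d a b.
Proof. intros Hb. apply Rinf_lb with 0; [eauto |]. intros x [c [_ ->]]. apply mdist_nonneg. Qed.

Lemma dist_to_nonneg (a : Z) (B : Z -> Prop) : 0 <= dist_to d a B.
Proof. apply Rinf_nonneg. intros x [c [_ ->]]. apply mdist_nonneg. Qed.

Lemma excess_nonneg (A B : Z -> Prop) : 0 <= excess d A B.
Proof. apply Rsup_nonneg. intros x [c [_ ->]]. apply dist_to_nonneg. Qed.

Lemma dist_to_le_excess (A B : Z -> Prop) a : compact_nonempty Z A -> compact_nonempty Z B ->
  A a -> dist_to d a B <= excess d A B.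
Proof.
  intros HA [[b0 Hb0] HB] Ha. destruct (compact_bounded A b0 HA) as [M HM].
  apply Rsup_ub with M; [eauto |].
  intros y [c [Hc ->]]. apply Rle_trans with (d c b0); auto. apply dist_to_le, Hb0.
Qed.

Lemma dist_to_triangle (a b : Z) (U : Z -> Prop) :
  (exists c, U c) -> dist_to d a U <= d a b + dist_to d b U.
Proof.
  intros HU. enough (dist_to d a U - d a b <= dist_to d b U) by lra.
  apply Rinf_greatest; [destruct HU as [c Hc]; eauto |].
  intros x [c [Hc ->]]. pose proof (dist_to_le a c U Hc). pose proof (Defs.dist_tri Z a b c). lra.
Qed.

Lemma excess_triangle (S T U : Z -> Prop) :
  compact_nonempty Z S -> compact_nonempty Z T -> compact_nonempty Z U ->
  excess d S U <= excess d S T + excess d T U.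
Proof.
  intros HS HT HU. apply Rsup_le.
  { pose proof (excess_nonneg S T). pose proof (excess_nonneg T U). lra. }
  intros y [a [Ha ->]].
  assert (dist_to d a U - excess d T U <= dist_to d a T).
  { apply Rinf_greatest; [destruct HT as [[b Hb] _]; eauto |].
    intros x [b [Hb ->]]. pose proof (dist_to_triangle a b U (proj1 HU)).
    pose proof (dist_to_le_excess T U b HT HU Hb). lra. }
  pose proof (dist_to_le_excess S T a HS HT Ha). lra.
Qed.

Lemma hausdorff_triangle (S T U : Z -> Prop) :
  compact_nonempty Z S -> compact_nonempty Z T -> compact_nonempty Z U ->
  hausdorff d S U <= hausdorff d S T + hausdorff d T U.
Proof.
  intros HS HT HU. rewrite !hausdorff_excess by apply Defs.dist_sym.
  pose proof (excess_triangle S T U HS HT HU). pose proof (excess_triangle U T S HU HT HS).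
  pose proof (Rmax_l (excess d S T) (excess d T S)).
  pose proof (Rmax_r (excess d S T) (excess d T S)).
  pose proof (Rmax_l (excess d T U) (excess d U T)).
  pose proof (Rmax_r (excess d T U) (excess d U T)).
  apply Rmax_lub; lra.
Qed.

Lemma hausdorff_refl (S : Z -> Prop) : hausdorff d S S = 0.
Proof.
  apply Rle_antisym; [| apply hausdorff_nonneg, mdist_nonneg].
  apply hausdorff_le_of_near; [lra | apply mdist_nonneg | |];
    intros a Ha _; exists a; rewrite mdist_refl; auto with real.
Qed.

Lemma near_of_hausdorff_le (S T : Z -> Prop) r a :
  compact_nonempty Z S -> compact_nonempty Z T -> hausdorff d S T <= r -> S a ->
  exists b, T b /\ d a b <= r.
Proof.
  intros HS HT Hr Ha. rewrite hausdorff_excess in Hr by apply Defs.dist_sym.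
  destruct (nearest_point T a HT) as [b [Hb Hab]]. exists b. split; [exact Hb |].
  pose proof (dist_to_le_excess S T a HS HT Ha).
  pose proof (Rmax_l (excess d S T) (excess d T S)). lra.
Qed.

Lemma hausdorff_le0_incl (S T : Z -> Prop) a :
  compact_nonempty Z S -> compact_nonempty Z T -> hausdorff d S T <= 0 -> S a -> T a.
Proof.
  intros HS HT H Ha. destruct (near_of_hausdorff_le S T 0 a HS HT H Ha) as [b [Hb Hab]].
  replace a with b; [exact Hb |].
  symmetry. apply Defs.dist_eq0. pose proof (mdist_nonneg Z a b). lra.
Qed.

Lemma hausdorff_eq0 (S T : Z -> Prop) :
  compact_nonempty Z S -> compact_nonempty Z T -> hausdorff d S T = 0 -> S = T.
Proof.
  intros HS HT H. apply set_ext; intro a. split; apply hausdorff_le0_incl; auto; [lra |].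
  rewrite hausdorff_sym; [lra | apply Defs.dist_sym].
Qed.

End CompactSets.

Definition CompactHyp (Z : MetricSpace) : MetricSpace.
Proof.
  refine {| carrier := {S : Z -> Prop | compact_nonempty Z S};
            mdist := fun A B => hausdorff (@mdist Z) (proj1_sig A) (proj1_sig B) |}.
  - intros [A HA] [B HB]; simpl. split.
    + intros H. destruct (hausdorff_eq0 Z A B HA HB H).
      f_equal. apply proof_irrelevance.
    + intros H. injection H as ->. apply hausdorff_refl.
  - intros [A HA] [B HB]; simpl. apply hausdorff_sym, Defs.dist_sym.
  - intros [A HA] [B HB] [C HC]; simpl. apply hausdorff_triangle; auto.
Defined.

Lemma closed_full (X : MetricSpace) : Defs.closed_set X (fun _ => True).
Proof. intros u l _ _. exact I. Qed.

Lemma closed_singleton (Y : MetricSpace) (y : Y) : Defs.closed_set Y (fun z => z = y).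
Proof.
  intros u l Hu Hc. symmetry. apply Defs.dist_eq0.
  apply Rle_antisym; [| apply mdist_nonneg].
  apply Rle_plus_epsilon. intros eps He. destruct (Hc eps He) as [N HN].
  specialize (HN N (le_n _)). rewrite Hu in HN. lra.
Qed.

Lemma range_img {T1 T2 : Type} (f : T1 -> T2) :
  (fun z => exists a, z = f a) = img f (fun _ => True).
Proof.
  apply set_ext; intro z. split; [intros [a ->]; exists a; auto | intros [a [_ ->]]; eauto].
Qed.

Lemma img_compact (X Z : MetricSpace) (f : X -> Z) (A : X -> Prop) :
  compact_space X -> Defs.closed_set X A -> (exists a, A a) ->
  isometric_embedding (@mdist X) Z f -> compact_nonempty Z (img f A).
Proof.
  intros HX HA [a0 Ha0] Hf. split; [exists (f a0), a0; auto |].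
  intros u Hu. apply choice in Hu as [a Ha].
  destruct (HX a) as [phi [l [Hp Hc]]].
  assert (Hl : A l) by (apply (HA (fun n => a (phi n)) l); auto; intros n; apply Ha).
  exists phi, (f l). split; [exact Hp |]. split; [exists l; auto |].
  intros eps He. destruct (Hc eps He) as [N HN]. exists N. intros n Hn.
  rewrite (proj2 (Ha (phi n))), Hf. auto.
Qed.

Lemma img_hyp_compact (X Z : MetricSpace) (f : X -> Z) (A : Hyp X) :
  compact_space X -> isometric_embedding (@mdist X) Z f -> compact_nonempty Z (img f (proj1_sig A)).
Proof. intros HX Hf. destruct A as [A [HA1 HA2]]. apply img_compact; auto. Qed.

Lemma hyp_inhabited (X : MetricSpace) (A : Hyp X) : inhabited X.
Proof. destruct A as [A [[a _] _]]. exact (inhabits a). Qed.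

Lemma closed_near (P Q : MetricSpace) (A : P -> Prop) (F : P -> Q -> R) r :
  compact_space P -> Defs.closed_set P A ->
  (forall p p' q q', F p q <= F p' q' + mdist p p' + mdist q q') ->
  Defs.closed_set Q (fun q => exists p, A p /\ F p q <= r).
Proof.
  intros HP HA HF u l Hu Hc. apply choice in Hu as [a Ha].
  destruct (HP a) as [phi [l' [Hp Hc']]].
  assert (Hl : A l') by (apply (HA (fun n => a (phi n)) l'); auto; intros n; apply Ha).
  exists l'. split; [exact Hl |]. apply Rle_plus_epsilon. intros eps He.
  pose proof (converges_subseq _ u l phi Hc Hp) as Hc2.
  destruct (Hc' (eps / 2) ltac:(lra)) as [N1 HN1].
  destruct (Hc2 (eps / 2) ltac:(lra)) as [N2 HN2].
  set (n := Nat.max N1 N2).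
  specialize (HN1 n ltac:(unfold n; lia)). specialize (HN2 n ltac:(unfold n; lia)).
  pose proof (HF l' (a (phi n)) l (u (phi n))).
  pose proof (proj2 (Ha (phi n))).
  rewrite (Defs.dist_sym P), (Defs.dist_sym Q) in H. lra.
Qed.

(** * Realizations of the Gromov-Hausdorff distance *)

Definition GH_admissible {T1 : Type} (d1 : T1 -> T1 -> R) {T2 : Type} (d2 : T2 -> T2 -> R)
  (r : R) : Prop :=
  exists (Z : MetricSpace) (f : T1 -> Z) (g : T2 -> Z),
    isometric_embedding d1 Z f /\ isometric_embedding d2 Z g /\
    hausdorff (@mdist Z) (fun z => exists a, z = f a) (fun z => exists b, z = g b) <= r.

Lemma GH_Rinf {T1 : Type} (d1 : T1 -> T1 -> R) {T2 : Type} (d2 : T2 -> T2 -> R) :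
  GH d1 d2 = Rinf (GH_admissible d1 d2).
Proof. reflexivity. Qed.

Lemma GH_admissible_nonneg {T1 : Type} (d1 : T1 -> T1 -> R) {T2 : Type} (d2 : T2 -> T2 -> R) r :
  GH_admissible d1 d2 r -> 0 <= r.
Proof.
  intros [Z [f [g [_ [_ H]]]]]. eapply Rle_trans; [| exact H].
  apply hausdorff_nonneg, mdist_nonneg.
Qed.

Section DisjointUnion.
Variables (X Y : MetricSpace) (x0 : X) (y0 : Y).

Definition sum_dist (p q : X + Y) : R :=
  match p, q with
  | inl a, inl a' => mdist a a'
  | inr b, inr b' => mdist b b'
  | inl a, inr b | inr b, inl a => 1 + mdist a x0 + mdist y0 b
  end.

Definition SumSpace : MetricSpace.
Proof.
  refine {| carrier := (X + Y)%type; mdist := sum_dist |}.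
  - intros [a|b] [a'|b']; simpl; split; intros H.
    + apply Defs.dist_eq0 in H. subst. reflexivity.
    + injection H as ->. apply mdist_refl.
    + pose proof (mdist_nonneg X a x0). pose proof (mdist_nonneg Y y0 b'). lra.
    + discriminate.
    + pose proof (mdist_nonneg X a' x0). pose proof (mdist_nonneg Y y0 b). lra.
    + discriminate.
    + apply Defs.dist_eq0 in H. subst. reflexivity.
    + injection H as ->. apply mdist_refl.
  - intros [a|b] [a'|b']; simpl; auto using Defs.dist_sym.
  - intros [a|b] [a'|b'] [a''|b'']; simpl.
    + apply Defs.dist_tri.
    + pose proof (Defs.dist_tri X a a' x0). lra.
    + pose proof (Defs.dist_tri X a x0 a''). rewrite (Defs.dist_sym X x0 a'') in H.
      pose proof (mdist_nonneg Y y0 b'). lra.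
    + pose proof (Defs.dist_tri Y y0 b' b''). lra.
    + pose proof (Defs.dist_tri X a'' a' x0). rewrite (Defs.dist_sym X a'' a') in H. lra.
    + pose proof (Defs.dist_tri Y b y0 b''). rewrite (Defs.dist_sym Y b y0) in H.
      pose proof (mdist_nonneg X a' x0). lra.
    + pose proof (Defs.dist_tri Y y0 b' b). rewrite (Defs.dist_sym Y b' b) in H. lra.
    + apply Defs.dist_tri.
Defined.

End DisjointUnion.

Lemma GH_admissible_exists (X Y : MetricSpace) : exists r, GH_admissible (@mdist X) (@mdist Y) r.
Proof.
  destruct (classic (inhabited X)) as [[x0]|HXe];
    [destruct (classic (inhabited Y)) as [[y0]|HYe] |].
  - eexists. exists (SumSpace X Y x0 y0), inl, inr.
    split; [| split]; [intros a b; reflexivity .. | apply Rle_refl].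
  - eexists. exists X, (fun a => a), (fun b => False_rect X (HYe (inhabits b))).
    split; [| split]; [intros a b; reflexivity | intros b; now destruct HYe | apply Rle_refl].
  - eexists. exists Y, (fun a => False_rect Y (HXe (inhabits a))), (fun b => b).
    split; [| split]; [intros a; now destruct HXe | intros a b; reflexivity | apply Rle_refl].
Qed.

(** * Nonexpansion *)

Section Lift.
Variables (X Y Z : MetricSpace) (f : X -> Z) (g : Y -> Z) (r : R).
Hypotheses (HX : compact_space X) (HY : compact_space Y).
Hypotheses (Hf : isometric_embedding (@mdist X) Z f) (Hg : isometric_embedding (@mdist Y) Z g).
Hypothesis Hr : hausdorff (@mdist Z) (fun z => exists a, z = f a) (fun z => exists b, z = g b) <= r.

Lemma realization_near (a : X) : inhabited Y -> exists b, mdist (f a) (g b) <= r.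
Proof.
  intros [y0]. rewrite !range_img in Hr.
  destruct (near_of_hausdorff_le Z _ _ r (f a)
              (img_compact X Z f _ HX (closed_full X) (ex_intro _ a I) Hf)
              (img_compact Y Z g _ HY (closed_full Y) (ex_intro _ y0 I) Hg)
              Hr (ex_intro _ a (conj I eq_refl))) as [w [[b [_ ->]] Hb]].
  eauto.
Qed.

Lemma near_set_closed (A : X -> Prop) :
  Defs.closed_set X A -> Defs.closed_set Y (fun b => exists a, A a /\ mdist (f a) (g b) <= r).
Proof.
  intros HA. apply (closed_near X Y A (fun a b => mdist (f a) (g b))); auto.
  intros a a' b b'.
  pose proof (Defs.dist_tri Z (f a) (f a') (g b)). pose proof (Defs.dist_tri Z (f a') (g b') (g b)).
  rewrite Hf in H. rewrite Hg, (Defs.dist_sym Y b' b) in H0. lra.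
Qed.

Lemma hyp_near (A : Hyp X) : inhabited Y ->
  exists B : Hyp Y, hausdorff (@mdist Z) (img f (proj1_sig A)) (img g (proj1_sig B)) <= r.
Proof.
  intros HYi.
  assert (Hr0 : 0 <= r) by (eapply Rle_trans; [| exact Hr]; apply hausdorff_nonneg, mdist_nonneg).
  destruct A as [A [[a0 Ha0] HA]]; simpl.
  set (B := fun b => exists a, A a /\ mdist (f a) (g b) <= r).
  assert (HB : (exists b, B b) /\ Defs.closed_set Y B).
  { split; [| apply near_set_closed, HA].
    destruct (realization_near a0 HYi) as [b Hb]. exists b, a0. auto. }
  exists (exist _ B HB); simpl.
  apply hausdorff_le_of_near; [exact Hr0 | apply mdist_nonneg | |].
  - intros z [a [Ha ->]] _. destruct (realization_near a HYi) as [b Hb].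
    exists (g b). split; [exists b; split; [exists a; auto | reflexivity] | exact Hb].
  - intros w [b [[a [Ha Hab]] ->]] _. exists (f a). split; [exists a; auto | exact Hab].
Qed.

End Lift.

Lemma hyp_realization (X Y : MetricSpace) r : compact_space X -> compact_space Y ->
  GH_admissible (@mdist X) (@mdist Y) r -> GH_admissible (hyp_dist X) (hyp_dist Y) r.
Proof.
  intros HX HY Hadm. pose proof (GH_admissible_nonneg _ _ _ Hadm) as Hr0.
  destruct Hadm as [Z [f [g [Hf [Hg Hr]]]]].
  assert (Hr' : hausdorff (@mdist Z) (fun z => exists b, z = g b) (fun z => exists a, z = f a) <= r)
    by (rewrite hausdorff_sym; [exact Hr | apply Defs.dist_sym]).
  set (Phi := fun A : Hyp X =>
         exist _ (img f (proj1_sig A)) (img_hyp_compact X Z f A HX Hf) : CompactHyp Z).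
  set (Psi := fun B : Hyp Y =>
         exist _ (img g (proj1_sig B)) (img_hyp_compact Y Z g B HY Hg) : CompactHyp Z).
  exists (CompactHyp Z), Phi, Psi. split; [| split].
  - intros A A'. apply hausdorff_img, Hf.
  - intros B B'. apply hausdorff_img, Hg.
  - apply hausdorff_le_of_near; [exact Hr0 | apply mdist_nonneg | |].
    + intros S [A ->] [T [B _]].
      destruct (hyp_near X Y Z f g r HX HY Hf Hg Hr A (hyp_inhabited Y B)) as [B' HB'].
      exists (Psi B'). split; [exists B'; reflexivity | exact HB'].
    + intros T [B ->] [S [A _]].
      destruct (hyp_near Y X Z g f r HY HX Hg Hf Hr' B (hyp_inhabited X A)) as [A' HA'].
      exists (Phi A'). split; [exists A'; reflexivity |].
      simpl. rewrite hausdorff_sym; [exact HA' | apply Defs.dist_sym].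
Qed.

Lemma GH_hyp_le (X Y : MetricSpace) : compact_space X -> compact_space Y ->
  GH (hyp_dist X) (hyp_dist Y) <= GH (@mdist X) (@mdist Y).
Proof.
  intros HX HY. rewrite !GH_Rinf. apply Rinf_le_subset.
  - apply GH_admissible_exists.
  - intros r. apply hyp_realization; auto.
  - apply GH_admissible_nonneg.
Qed.

(** * A one-point space *)

Definition sing (Y : MetricSpace) (y : Y) : Hyp Y :=
  exist _ (fun z => z = y) (conj (ex_intro _ y eq_refl) (closed_singleton Y y)).

Lemma hyp_dist_sing (Y : MetricSpace) (y y' : Y) : hyp_dist Y (sing Y y) (sing Y y') = mdist y y'.
Proof. apply hausdorff_singletons. Qed.

Lemma hyp_bounded (Y : MetricSpace) (y0 : Y) : compact_space Y ->
  exists M, forall B B' : Hyp Y, hyp_dist Y B B' <= M.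
Proof.
  intros HY.
  assert (HYc : compact_nonempty Y (fun _ => True)).
  { split; [exists y0; exact I |]. intros u _. destruct (HY u) as [phi [l [Hp Hc]]]. eauto. }
  destruct (compact_bounded Y _ y0 HYc) as [M HM].
  assert (M0 : 0 <= M) by (pose proof (HM y0 I) as H; rewrite mdist_refl in H; exact H).
  exists (2 * M). intros B B'. unfold hyp_dist.
  destruct (proj1 (proj2_sig B)) as [b0 Hb0]. destruct (proj1 (proj2_sig B')) as [b0' Hb0'].
  apply hausdorff_le_of_near; [lra | apply mdist_nonneg | |].
  - intros a Ha _. exists b0'. split; [exact Hb0' |].
    pose proof (Defs.dist_tri Y a y0 b0'). pose proof (HM a I). pose proof (HM b0' I).
    rewrite (Defs.dist_sym Y y0 b0') in H. lra.
  - intros b Hb _. exists b0. split; [exact Hb0 |].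
    pose proof (Defs.dist_tri Y b0 y0 b). pose proof (HM b0 I). pose proof (HM b I).
    rewrite (Defs.dist_sym Y y0 b) in H. lra.
Qed.

Section OnePoint.
Variables (X : MetricSpace) (x : X).
Hypothesis Hx : forall y : X, y = x.

Lemma point_compact : compact_space X.
Proof.
  intros u. exists (fun n => n), x. split; [intros n m H; exact H |].
  intros eps He. exists O. intros n _. rewrite (Hx (u n)), mdist_refl. exact He.
Qed.

Definition hyp_whole : Hyp X := exist _ (fun _ => True) (conj (ex_intro _ x I) (closed_full X)).

Lemma hyp_point_unique (A : Hyp X) : A = hyp_whole.
Proof.
  destruct A as [A [[a Ha] Hc]]. unfold hyp_whole.
  assert (A = fun _ => True).
  { apply set_ext. intros z. split; [auto |]. intros _. rewrite (Hx z), <- (Hx a). exact Ha. }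
  subst. f_equal. apply proof_irrelevance.
Qed.

Lemma point_realization (Y : MetricSpace) r : compact_space Y ->
  GH_admissible (hyp_dist X) (hyp_dist Y) r -> GH_admissible (@mdist X) (@mdist Y) r.
Proof.
  intros HY Hadm. pose proof (GH_admissible_nonneg _ _ _ Hadm) as Hr0.
  destruct Hadm as [Z [F [G [HF [HG Hr]]]]].
  set (p := F hyp_whole).
  assert (Hp : (fun z => exists A, z = F A) = (fun z => z = p)).
  { apply set_ext; intros z. split; [intros [A ->]; rewrite (hyp_point_unique A); reflexivity |].
    intros ->. exists hyp_whole. reflexivity. }
  rewrite Hp in Hr.
  assert (Hnear : forall B, mdist p (G B) <= r).
  { intros B. destruct (hyp_inhabited Y B) as [y0].
    destruct (hyp_bounded Y y0 HY) as [M HM].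
    eapply Rle_trans; [| exact Hr].
    apply dist_le_hausdorff_point with (M := mdist p (G B) + M); [exists B; reflexivity |].
    intros w [B' ->]. pose proof (Defs.dist_tri Z p (G B) (G B')) as H.
    rewrite HG in H. specialize (HM B B'). lra. }
  exists Z, (fun _ => p), (fun y => G (sing Y y)). split; [| split].
  - intros a b. rewrite mdist_refl, (Hx a), (Hx b), mdist_refl. reflexivity.
  - intros a b. rewrite HG. apply hyp_dist_sing.
  - apply hausdorff_le_of_near; [exact Hr0 | apply mdist_nonneg | |].
    + intros z [a ->] [w [b ->]].
      exists (G (sing Y b)). split; [exists b; reflexivity | apply Hnear].
    + intros w [b ->] _. exists p. split; [exists x; reflexivity | apply Hnear].
Qed.

End OnePoint.

Theorem mainTheorem10 :
  (forall X Y : MetricSpace, compact_space X -> compact_space Y ->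
     GH (hyp_dist X) (hyp_dist Y) <= GH (@mdist X) (@mdist Y)) /\
  (forall (X : MetricSpace) (x : X), (forall y : X, y = x) ->
   forall Y : MetricSpace, compact_space Y ->
     GH (hyp_dist X) (hyp_dist Y) = GH (@mdist X) (@mdist Y)).
Proof.
  split; [exact GH_hyp_le |].
  intros X x Hx Y HY. pose proof (point_compact X x Hx) as HX.
  apply Rle_antisym; [apply GH_hyp_le; assumption |].
  rewrite !GH_Rinf. apply Rinf_le_subset.
  - destruct (GH_admissible_exists X Y) as [r Hr].
    exists r. apply hyp_realization; assumption.
  - intros r. apply point_realization with x; assumption.
  - apply GH_admissible_nonneg.
Qed.
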